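(* Fix $\epsilon\in(0,1)$ and let $\theta(n)=\epsilon$ for all $n$. Then for all sufficiently large $n$ and every $\rho\in[0,c]$, the quantities $$T_i=\frac{e^{\rho i}\,b^{\binom i2}\,k^2\,a!^2}{n^i\,i!\,(a-i)!^2}$$ satisfy $T_i\le n^{-c_5}$ for all $3\le i\le\lceil n/k\rceil-1$, and $T_i\le n^{1-c_5}$ for $i\in\{2,\lceil n/k\rceil\}$.
   Context: Let $p\in(0,1)$ be constant, $q=1-p$, $b=1/q$, $\log$ natural logarithm, $\gamma=2\log_b n-2\log_b\log_b n-2\log_b 2$, $\Delta=\gamma-\lfloor\gamma\rfloor$, $a=\lfloor\gamma\rfloor+1$, and $x_0=x_0(n)$ the smallest nonnegative $x$ with $(1-\Delta+x)\log_b(1-\Delta+x)+(1-\Delta)(\Delta-x)/2\le0$. Let $k=\lceil n/(\gamma-x_0-\epsilon)\rceil$. Let $c_2=-\frac{(1-\epsilon)\log(1-\epsilon)}{\epsilon}\in(0,1)$, $c=\frac{1-c_2}{2}\in(0,\frac12)$, and $c_5=\min\{\frac1{10},\frac{c}{2\log b},\frac{1-c}{2\log b}\}$. *)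

From Stdlib Require Import Reals Lra Lia ZArith.
Open Scope R_scope.

(* floor and ceiling via Stdlib's [up] (IZR (up x) > x, IZR (up x) - x <= 1) *)
Definition Rfloor (x : R) : Z := (up x - 1)%Z.
Definition Rceil (x : R) : Z := (- Rfloor (- x))%Z.

Definition bb (p : R) : R := / (1 - p).
Definition logb (p x : R) : R := ln x / ln (bb p).

Definition gam (p : R) (n : nat) : R :=
  2 * logb p (INR n) - 2 * logb p (logb p (INR n)) - 2 * logb p 2.
Definition Delta (p : R) (n : nat) : R := gam p n - IZR (Rfloor (gam p n)).
Definition aZ (p : R) (n : nat) : Z := (Rfloor (gam p n) + 1)%Z.

(* the function whose smallest nonnegative zero-crossing defines x_0 *)
Definition x0fun (p : R) (n : nat) (x : R) : R :=
  (1 - Delta p n + x) * logb p (1 - Delta p n + x)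
  + (1 - Delta p n) * (Delta p n - x) / 2.

Definition is_x0 (p : R) (n : nat) (x : R) : Prop :=
  0 <= x /\ x0fun p n x <= 0 /\
  (forall y, 0 <= y -> x0fun p n y <= 0 -> x <= y).

Definition kZ (p eps x0 : R) (n : nat) : Z := Rceil (INR n / (gam p n - x0 - eps)).

Definition c2 (eps : R) : R := - ((1 - eps) * ln (1 - eps)) / eps.
Definition cc (eps : R) : R := (1 - c2 eps) / 2.
Definition c5 (p eps : R) : R :=
  Rmin (1/10) (Rmin (cc eps / (2 * ln (bb p))) ((1 - cc eps) / (2 * ln (bb p)))).

Definition Tq (p rho : R) (n k a i : nat) : R :=
  exp (rho * INR i) * (bb p) ^ ((i * (i - 1)) / 2) * (INR k) ^ 2 * (INR (fact a)) ^ 2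
  / ((INR n) ^ i * INR (fact i) * (INR (fact (a - i))) ^ 2).

From Stdlib Require Import Reals Lra Lia ZArith.
(* Imported after Reals, whose own [Delta] would otherwise shadow the one of Defs. *)
From Pilot Require Import Defs.
Open Scope R_scope.

(* ln T_i is bounded by two convex quadratics in i: one from a!/(a-i)! <= a^i, sharp for small i,
   and one from a! <= i! a^(a-i) and a Stirling-type bound on i!, sharp for i near a.  By
   convexity it suffices to check them at i = 2, 3, L = log_b n and at the top indices, where
   everything reduces to comparing multiples of L, ln L and ln n = L ln b, true for n large.
   The top index m = ceil (n/k) is a - 1 or a.  If m = a, then n/k > a - 1 forces
   x_0 + eps < Delta, and the defining property of x_0 then bounds (1 - Delta) ln b by
   2 c_2 = 2 (1 - 2c), which pays for the extra index. *)

Lemma ln_le_sub_1 x : 0 < x -> ln x <= x - 1.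
Proof. intro Hx. pose proof (exp_ineq1_le (ln x)). rewrite exp_ln in H; lra. Qed.

Lemma ln_lt_sub_1 x : 0 < x -> x <> 1 -> ln x < x - 1.
Proof.
  intros Hx Hx1. pose proof (exp_ineq1 (ln x) (ln_neq_0 x Hx1 Hx)).
  rewrite exp_ln in H; lra.
Qed.

Lemma exp_le x y : x <= y -> exp x <= exp y.
Proof. intros [H|H]; [left; apply exp_increasing | subst]; lra. Qed.

Lemma ln_le x y : 0 < x -> x <= y -> ln x <= ln y.
Proof. intros H [H1|H1]; [left; apply ln_increasing | subst]; lra. Qed.

Lemma ln_div x y : 0 < x -> 0 < y -> ln (x / y) = ln x - ln y.
Proof.
  intros; unfold Rdiv; rewrite ln_mult, ln_Rinv; try lra.
  now apply Rinv_0_lt_compat.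
Qed.

Lemma ln_nonneg x : 1 <= x -> 0 <= ln x.
Proof. intro; rewrite <- ln_1; apply ln_le; lra. Qed.

Lemma ln_2_bounds : 0 <= ln 2 <= 1.
Proof. split; [apply ln_nonneg | pose proof (ln_le_sub_1 2)]; lra. Qed.

Lemma Rdiv_nonneg x y : 0 <= x -> 0 < y -> 0 <= x / y.
Proof. intros; apply Rmult_le_pos; [lra | left; now apply Rinv_0_lt_compat]. Qed.

Lemma pow_exp x n : 0 < x -> x ^ n = exp (INR n * ln x).
Proof. intro; now rewrite <- Rpower_pow. Qed.

Lemma INR_mul_pred_div2 i : INR ((i * (i - 1)) / 2) = INR i * (INR i - 1) / 2.
Proof.
  destruct i as [|i]; [simpl; lra|].
  replace (S i - 1)%nat with i by lia.
  assert (Heven : exists q, (S i * i = q * 2)%nat).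
  { destruct (Nat.Even_or_Odd i) as [[q Hq]|[q Hq]].
    - exists (S i * q)%nat. lia.
    - exists ((q + 1) * i)%nat. lia. }
  destruct Heven as [q Hq]. rewrite Hq, Nat.div_mul by lia.
  apply (f_equal INR) in Hq. rewrite !mult_INR, S_INR in Hq.
  replace (INR (S i)) with (INR i + 1) by (rewrite S_INR; ring).
  simpl in Hq. lra.
Qed.

Lemma fact_le_fact_mul_pow d i : (fact (d + i) <= fact i * (d + i) ^ d)%nat.
Proof.
  induction d as [|d IH]; [simpl; lia|].
  replace (S d + i)%nat with (S (d + i)) by lia.
  change (fact (S (d + i))) with (S (d + i) * fact (d + i))%nat.
  rewrite Nat.pow_succ_r'.
  assert ((d + i) ^ d <= S (d + i) ^ d)%nat by (apply Nat.pow_le_mono_l; lia).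
  assert (fact (d + i) <= fact i * S (d + i) ^ d)%nat by nia.
  nia.
Qed.

Lemma fact_le_pow_mul_fact d i : (fact (d + i) <= (d + i) ^ i * fact d)%nat.
Proof.
  induction i as [|i IH]; [rewrite Nat.add_0_r; simpl; lia|].
  replace (d + S i)%nat with (S (d + i)) by lia.
  change (fact (S (d + i))) with (S (d + i) * fact (d + i))%nat.
  rewrite Nat.pow_succ_r'.
  assert ((d + i) ^ i <= S (d + i) ^ i)%nat by (apply Nat.pow_le_mono_l; lia).
  assert (fact (d + i) <= S (d + i) ^ i * fact d)%nat by nia.
  nia.
Qed.

(* Stirling-type upper bound, by induction using (1 + 1/i)^(i+1) >= e. *)
Lemma INR_fact_le_exp i : (1 <= i)%nat ->
  INR (fact i) <= exp ((INR i + 1) * ln (INR i) + 1 - INR i).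
Proof.
  induction i as [|i IH]; intro Hi; [lia|].
  destruct (Nat.eq_dec i 0) as [->|Hi0].
  { simpl. rewrite ln_1, <- exp_0. apply exp_le. lra. }
  specialize (IH ltac:(lia)).
  assert (Hx : 1 <= INR i) by (apply (le_INR 1); lia).
  change (fact (S i)) with (S i * fact i)%nat. rewrite mult_INR, S_INR.
  assert (Hstep : (INR i + 1) * ln (INR i) + 1 <= (INR i + 1) * ln (INR i + 1)).
  { assert (Hq : 0 < INR i / (INR i + 1)) by (apply Rdiv_lt_0_compat; lra).
    pose proof (ln_le_sub_1 _ Hq) as Hl. rewrite ln_div in Hl by lra.
    replace (INR i / (INR i + 1) - 1) with (- / (INR i + 1)) in Hl by (field; lra).
    apply (Rmult_le_compat_l (INR i + 1)) in Hl; [|lra].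
    replace ((INR i + 1) * - / (INR i + 1)) with (-1) in Hl by (field; lra). lra. }
  rewrite <- (exp_ln (INR i + 1)) at 1 by lra.
  apply Rle_trans with (exp (ln (INR i + 1)) * exp ((INR i + 1) * ln (INR i) + 1 - INR i)).
  - apply Rmult_le_compat_l; [left; apply exp_pos | exact IH].
  - rewrite <- exp_plus. apply exp_le. lra.
Qed.
(* The two bounds on ln T_i as functions of x = i; lnn, la, lk stand for ln n, ln a, ln k.
   lnT_hi also uses ln i <= ln a + i/a - 1. *)
Definition lnT_lo (rho lam lnn la lk x : R) : R :=
  rho * x + x * (x - 1) / 2 * lam + 2 * lk + 2 * x * la - x * lnn.

Definition lnT_hi (rho lam lnn a la lk x : R) : R :=
  rho * x + x * (x - 1) / 2 * lam + 2 * lk + 2 * (a - x) * la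
  + (x + 1) * (la + x / a - 1) - x + 1 - x * lnn.

Lemma Tq_le_exp_mul p rho n k a i X : 0 < p < 1 -> (1 <= n)%nat -> (1 <= k)%nat ->
  INR (fact a) ^ 2 / (INR (fact i) * INR (fact (a - i)) ^ 2) <= X ->
  Tq p rho n k a i <=
  exp (rho * INR i + INR i * (INR i - 1) / 2 * ln (bb p) + 2 * ln (INR k)
       - INR i * ln (INR n)) * X.
Proof.
  intros Hp Hn Hk HX.
  assert (Hb : 0 < bb p) by (unfold bb; apply Rinv_0_lt_compat; lra).
  assert (HN : 0 < INR n) by (apply lt_0_INR; lia).
  assert (HK : 0 < INR k) by (apply lt_0_INR; lia).
  pose proof (INR_fact_lt_0 i). pose proof (INR_fact_lt_0 (a - i)).
  unfold Tq.
  rewrite (pow_exp (bb p)), (pow_exp (INR k)), (pow_exp (INR n)), INR_mul_pred_div2 by auto.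
  change (INR 2) with 2.
  replace (exp (rho * INR i) * exp (INR i * (INR i - 1) / 2 * ln (bb p)) * exp (2 * ln (INR k)) *
     INR (fact a) ^ 2 / (exp (INR i * ln (INR n)) * INR (fact i) * INR (fact (a - i)) ^ 2))
   with (exp (rho * INR i) * exp (INR i * (INR i - 1) / 2 * ln (bb p)) * exp (2 * ln (INR k)) *
         / exp (INR i * ln (INR n)) * (INR (fact a) ^ 2 / (INR (fact i) * INR (fact (a - i)) ^ 2)))
    by (field; repeat split; apply Rgt_not_eq; try apply exp_pos; assumption).
  rewrite <- exp_Ropp, <- !exp_plus.
  apply Rmult_le_compat_l; [left; apply exp_pos | exact HX].
Qed.

Lemma fact_ratio_le_lo a i : (1 <= a)%nat -> (i <= a)%nat ->
  INR (fact a) ^ 2 / (INR (fact i) * INR (fact (a - i)) ^ 2) <= exp (2 * INR i * ln (INR a)).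
Proof.
  intros Ha Hi.
  pose proof (fact_le_pow_mul_fact (a - i) i) as F. replace (a - i + i)%nat with a in F by lia.
  apply le_INR in F. rewrite mult_INR, pow_INR in F.
  assert (HA : 0 < INR a) by (apply lt_0_INR; lia).
  pose proof (INR_fact_lt_0 (a - i)).
  assert (HF1 : 1 <= INR (fact i)) by (apply (le_INR 1); pose proof (lt_O_fact i); lia).
  replace (2 * INR i * ln (INR a)) with (INR (i * 2) * ln (INR a)) by (rewrite mult_INR; simpl; ring).
  rewrite <- pow_exp, pow_mult by auto.
  apply Rle_trans with (INR (fact a) ^ 2 / INR (fact (a - i)) ^ 2).
  - unfold Rdiv. apply Rmult_le_compat_l; [nra|].
    rewrite Rinv_mult. rewrite <- (Rmult_1_l (/ INR (fact (a - i)) ^ 2)) at 2.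
    apply Rmult_le_compat_r; [left; apply Rinv_0_lt_compat, pow_lt; auto|].
    rewrite <- Rinv_1. apply Rinv_le_contravar; lra.
  - apply Rle_trans with ((INR a ^ i * INR (fact (a - i))) ^ 2 / INR (fact (a - i)) ^ 2).
    + apply Rmult_le_compat_r; [left; apply Rinv_0_lt_compat, pow_lt; auto|].
      apply pow_incr. split; [apply pos_INR | exact F].
    + right. field. lra.
Qed.

Lemma fact_ratio_le_hi a i : (1 <= i)%nat -> (i <= a)%nat ->
  INR (fact a) ^ 2 / (INR (fact i) * INR (fact (a - i)) ^ 2) <=
  exp (2 * (INR a - INR i) * ln (INR a) + (INR i + 1) * (ln (INR a) + INR i / INR a - 1) + 1 - INR i).
Proof.
  intros Hi1 Hi.
  pose proof (fact_le_fact_mul_pow (a - i) i) as F. replace (a - i + i)%nat with a in F by lia.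
  apply le_INR in F. rewrite mult_INR, pow_INR in F.
  assert (HA : 0 < INR a) by (apply lt_0_INR; lia).
  assert (HI : 0 < INR i) by (apply lt_0_INR; lia).
  pose proof (INR_fact_lt_0 i).
  assert (HB1 : 1 <= INR (fact (a - i))) by (apply (le_INR 1); pose proof (lt_O_fact (a - i)); lia).
  apply Rle_trans with (INR (fact a) ^ 2 / INR (fact i)).
  { unfold Rdiv. apply Rmult_le_compat_l; [nra|].
    rewrite Rinv_mult. rewrite <- (Rmult_1_r (/ INR (fact i))) at 2.
    apply Rmult_le_compat_l; [left; apply Rinv_0_lt_compat; auto|].
    rewrite <- Rinv_1. apply Rinv_le_contravar; [lra|]. rewrite <- (pow1 2). apply pow_incr. lra. }
  apply Rle_trans with ((INR (fact i) * INR a ^ (a - i)) ^ 2 / INR (fact i)).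
  { apply Rmult_le_compat_r; [left; apply Rinv_0_lt_compat; auto|].
    apply pow_incr. split; [apply pos_INR | exact F]. }
  replace ((INR (fact i) * INR a ^ (a - i)) ^ 2 / INR (fact i)) with
    (exp (INR ((a - i) * 2) * ln (INR a)) * INR (fact i))
    by (rewrite <- pow_exp, pow_mult by auto; field; lra).
  rewrite mult_INR, minus_INR by lia. change (INR 2) with 2.
  replace (2 * (INR a - INR i) * ln (INR a) + (INR i + 1) * (ln (INR a) + INR i / INR a - 1) + 1 - INR i)
    with ((INR a - INR i) * 2 * ln (INR a) + ((INR i + 1) * (ln (INR a) + INR i / INR a - 1) + 1 - INR i))
    by ring.
  rewrite exp_plus. apply Rmult_le_compat_l; [left; apply exp_pos|].
  apply Rle_trans with (1 := INR_fact_le_exp i Hi1). apply exp_le.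
  assert (ln (INR i) - ln (INR a) <= INR i / INR a - 1).
  { rewrite <- ln_div by auto. apply ln_le_sub_1. now apply Rdiv_lt_0_compat. }
  nra.
Qed.

Lemma Tq_le_exp_lnT_lo p rho n k a i : 0 < p < 1 -> (1 <= n)%nat -> (1 <= k)%nat ->
  (1 <= a)%nat -> (i <= a)%nat ->
  Tq p rho n k a i <= exp (lnT_lo rho (ln (bb p)) (ln (INR n)) (ln (INR a)) (ln (INR k)) (INR i)).
Proof.
  intros. eapply Rle_trans; [apply Tq_le_exp_mul, fact_ratio_le_lo; auto|].
  rewrite <- exp_plus. apply exp_le. unfold lnT_lo. lra.
Qed.

Lemma Tq_le_exp_lnT_hi p rho n k a i : 0 < p < 1 -> (1 <= n)%nat -> (1 <= k)%nat ->
  (1 <= i)%nat -> (i <= a)%nat ->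
  Tq p rho n k a i <= exp (lnT_hi rho (ln (bb p)) (ln (INR n)) (INR a) (ln (INR a)) (ln (INR k)) (INR i)).
Proof.
  intros. eapply Rle_trans; [apply Tq_le_exp_mul, fact_ratio_le_hi; auto|].
  rewrite <- exp_plus. apply exp_le. unfold lnT_hi. lra.
Qed.

Lemma convex_quadratic_le_of_endpoints (f : R -> R) al be c0 u v x M :
  0 <= al -> (forall y, f y = al * y * y + be * y + c0) ->
  u <= x <= v -> f u <= M -> f v <= M -> f x <= M.
Proof.
  intros Hal Hf Hx Hu Hv. rewrite Hf in *.
  destruct (Req_dec u v) as [<-|Huv]; [replace x with u by lra; auto|].
  assert (Hchord : (al * x * x + be * x + c0) * (v - u) =
     (v - x) * (al * u * u + be * u + c0) + (x - u) * (al * v * v + be * v + c0)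
     + al * (x - u) * (x - v) * (v - u)) by ring.
  assert (al * (x - u) * (v - x) * (v - u) >= 0)
    by (apply Rle_ge; repeat apply Rmult_le_pos; lra).
  apply Rmult_le_reg_r with (v - u); [lra|]. nra.
Qed.

Lemma lnT_lo_quadratic rho lam lnn la lk y :
  lnT_lo rho lam lnn la lk y = lam / 2 * y * y + (rho - lam / 2 + 2 * la - lnn) * y + 2 * lk.
Proof. unfold lnT_lo. field. Qed.

Lemma lnT_hi_quadratic rho lam lnn a la lk y : a <> 0 ->
  lnT_hi rho lam lnn a la lk y = (lam / 2 + / a) * y * y
    + (rho - lam / 2 - 2 * la + (la - 1) + / a - 1 - lnn) * y + (2 * lk + 2 * a * la + la).
Proof. intro. unfold lnT_hi. field. auto. Qed.

Lemma Rfloor_spec x : IZR (Rfloor x) <= x < IZR (Rfloor x) + 1.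
Proof. unfold Rfloor. rewrite minus_IZR. destruct (archimed x). simpl. lra. Qed.

Lemma Rceil_spec x : x <= IZR (Rceil x) < x + 1.
Proof. unfold Rceil. rewrite opp_IZR. destruct (Rfloor_spec (- x)). lra. Qed.

Lemma INR_Z_to_nat z : (0 <= z)%Z -> INR (Z.to_nat z) = IZR z.
Proof. intro. now rewrite INR_IZR_INZ, Z2Nat.id. Qed.

Lemma INR_floor_succ x : 0 <= x -> INR (Z.to_nat (Rfloor x + 1)) = IZR (Rfloor x) + 1.
Proof.
  intro Hx. destruct (Rfloor_spec x).
  assert (-1 < Rfloor x)%Z by (apply lt_IZR; lra).
  rewrite INR_Z_to_nat, plus_IZR by lia. reflexivity.
Qed.

Lemma INR_ceil_bounds x : 0 < x -> x <= INR (Z.to_nat (Rceil x)) < x + 1.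
Proof.
  intro Hx. destruct (Rceil_spec x).
  assert (-1 < Rceil x)%Z by (apply lt_IZR; lra).
  rewrite INR_Z_to_nat by lia. lra.
Qed.

Lemma Delta_range p n : 0 <= Delta p n < 1.
Proof. unfold Delta. destruct (Rfloor_spec (gam p n)). lra. Qed.

Lemma INR_aZ p n : 0 <= gam p n -> INR (Z.to_nat (aZ p n)) = gam p n + 1 - Delta p n.
Proof. intro. unfold aZ, Delta. rewrite INR_floor_succ by auto. ring. Qed.

Lemma ln_bb_pos p : 0 < p < 1 -> 0 < ln (bb p).
Proof.
  intro. rewrite <- ln_1. apply ln_increasing; [lra|].
  unfold bb. rewrite <- Rinv_1. apply Rinv_lt_contravar; lra.
Qed.

Lemma x0_le_Delta p n x : is_x0 p n x -> x <= Delta p n.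
Proof.
  intros (_ & _ & Hmin). apply Hmin; [apply Delta_range|].
  unfold x0fun, logb. replace (1 - Delta p n + Delta p n) with 1 by ring.
  rewrite ln_1. lra.
Qed.

Lemma xlnx_chord t u : 0 < t < u -> u < 1 -> - (t * ln t) * (1 - u) <= - (u * ln u) * (1 - t).
Proof.
  intros Ht Hu.
  assert (Htangent : t * ln u + t - u <= t * ln t).
  { assert (Hq : 0 < u / t) by (apply Rdiv_lt_0_compat; lra).
    pose proof (ln_le_sub_1 _ Hq) as Hl. rewrite ln_div in Hl by lra.
    apply (Rmult_le_compat_l t) in Hl; [|lra].
    replace (t * (u / t - 1)) with (u - t) in Hl by (field; lra). lra. }
  pose proof (ln_le_sub_1 u ltac:(lra)).
  assert (0 <= (u - t) * (u - 1 - ln u)) by (apply Rmult_le_pos; lra).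
  nra.
Qed.

Lemma Delta_large_of_x0_gap p eps n x : 0 < p < 1 -> 0 < eps < 1 -> is_x0 p n x ->
  x + eps < Delta p n -> (1 - Delta p n) * ln (bb p) <= 2 * c2 eps.
Proof.
  intros Hp He Hx Hgap. pose proof (x0_le_Delta p n x Hx) as HxD. destruct Hx as (Hx0 & Hfun & _).
  pose proof (Delta_range p n). pose proof (ln_bb_pos p Hp) as Hlam.
  set (D := Delta p n) in *. set (lam := ln (bb p)) in *.
  set (t := 1 - D + x).
  assert (Hlnt : t * ln t + lam * (1 - D) * (1 - t) / 2 <= 0).
  { unfold x0fun, logb in Hfun. fold D lam t in Hfun.
    apply (Rmult_le_compat_l lam) in Hfun; [|lra].
    replace (lam * (t * (ln t / lam) + (1 - D) * (D - x) / 2)) with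
      (t * ln t + lam * (1 - D) * (1 - t) / 2) in Hfun by (unfold t; field; lra).
    lra. }
  pose proof (xlnx_chord t (1 - eps) ltac:(unfold t; lra) ltac:(lra)) as Hchord.
  assert (Hc2 : - ((1 - eps) * ln (1 - eps)) = c2 eps * eps) by (unfold c2; field; lra).
  rewrite Hc2 in Hchord. replace (1 - (1 - eps)) with eps in Hchord by ring.
  assert (Ht1 : 0 < (1 - t) * eps) by (apply Rmult_lt_0_compat; unfold t; lra).
  apply Rmult_le_reg_r with ((1 - t) * eps); [exact Ht1|]. nra.
Qed.

Lemma c2_range eps : 0 < eps < 1 -> 0 < c2 eps < 1.
Proof.
  intros He. unfold c2.
  assert (Hl : ln (1 - eps) < 0) by (rewrite <- ln_1; apply ln_increasing; lra).
  assert (Hinv : 0 < / (1 - eps)) by (apply Rinv_0_lt_compat; lra).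
  assert (Hne : / (1 - eps) <> 1).
  { intro E. assert (1 - eps = 1) by (rewrite <- (Rinv_inv (1 - eps)), E; apply Rinv_1). lra. }
  pose proof (ln_lt_sub_1 _ Hinv Hne) as Hlt. rewrite ln_Rinv in Hlt by lra.
  apply (Rmult_lt_compat_r (1 - eps)) in Hlt; [|lra].
  replace ((/ (1 - eps) - 1) * (1 - eps)) with eps in Hlt by (field; lra).
  split.
  - apply Rdiv_lt_0_compat; nra.
  - apply Rmult_lt_reg_r with eps; [lra|]. unfold Rdiv. rewrite Rmult_assoc, Rinv_l by lra. lra.
Qed.

Lemma c5_spec p eps : 0 < p < 1 -> 0 < eps < 1 ->
  0 < cc eps <= 1/2 /\ c5 p eps <= 1/10 /\
  c5 p eps * ln (bb p) <= cc eps / 2 /\ c5 p eps * ln (bb p) <= (1 - cc eps) / 2.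
Proof.
  intros Hp He. pose proof (c2_range eps He). pose proof (ln_bb_pos p Hp).
  assert (Hmin : forall u, c5 p eps <= u / (2 * ln (bb p)) -> c5 p eps * ln (bb p) <= u / 2).
  { intros u Hu. apply (Rmult_le_compat_r (ln (bb p))) in Hu; [|lra].
    replace (u / (2 * ln (bb p)) * ln (bb p)) with (u / 2) in Hu by (field; lra). exact Hu. }
  assert (c5 p eps <= cc eps / (2 * ln (bb p))) by (eapply Rle_trans; [apply Rmin_r | apply Rmin_l]).
  assert (c5 p eps <= (1 - cc eps) / (2 * ln (bb p))) by (eapply Rle_trans; [apply Rmin_r | apply Rmin_r]).
  repeat split; try (apply Hmin; assumption); [unfold cc; lra .. | apply Rmin_l].
Qed.

Definition eventually (P : R -> Prop) : Prop := exists L0, forall L, L0 <= L -> P L.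

Lemma eventually_and (P Q : R -> Prop) :
  eventually P -> eventually Q -> eventually (fun L => P L /\ Q L).
Proof.
  intros [L1 H1] [L2 H2]. exists (Rmax L1 L2). intros L HL.
  split; [apply H1 | apply H2]; eapply Rle_trans; [apply Rmax_l | | apply Rmax_r | ]; exact HL.
Qed.

Lemma eventually_ge M : eventually (fun L => M <= L).
Proof. now exists M. Qed.

Lemma ln_le_twice_sqrt L : 0 < L -> ln L <= 2 * sqrt L.
Proof.
  intro HL. pose proof (sqrt_lt_R0 L HL).
  rewrite <- (sqrt_sqrt L) at 1 by lra. rewrite ln_mult by lra.
  pose proof (ln_le_sub_1 (sqrt L) H). lra.
Qed.

Lemma eventually_lin_ln_le A B C : 0 <= B -> 0 < C ->
  eventually (fun L => A + B * ln L <= C * L).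
Proof.
  intros HB HC. set (t := Rmax 1 ((Rabs A + 2 * B) / C)).
  exists (t * t). intros L HL.
  assert (Ht1 : 1 <= t) by apply Rmax_l.
  assert (Ht : Rabs A + 2 * B <= C * t).
  { pose proof (Rmax_r 1 ((Rabs A + 2 * B) / C)) as H. fold t in H.
    apply (Rmult_le_compat_l C) in H; [|lra].
    replace (C * ((Rabs A + 2 * B) / C)) with (Rabs A + 2 * B) in H by (field; lra). exact H. }
  set (s := sqrt L).
  assert (Hss : s * s = L) by (apply sqrt_sqrt; nra).
  assert (Hs : t <= s) by (unfold s; rewrite <- (sqrt_square t) by lra; apply sqrt_le_1_alt; lra).
  pose proof (ln_le_twice_sqrt L ltac:(nra)) as Hln. fold s in Hln.
  assert (HA : A <= Rabs A * s) by (pose proof (Rle_abs A); pose proof (Rabs_pos A); nra).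
  assert (B * ln L <= 2 * B * s) by nra.
  assert ((Rabs A + 2 * B) * s <= C * t * s) by (apply Rmult_le_compat_r; lra).
  assert (C * t * s <= C * s * s) by (apply Rmult_le_compat_r; nra).
  assert (C * s * s = C * L) by (rewrite <- Hss; ring).
  lra.
Qed.

Lemma cube_div_27_le_exp x : 0 <= x -> x * x * x / 27 <= exp x.
Proof.
  intros Hx.
  replace (exp x) with (exp (x / 3) * exp (x / 3) * exp (x / 3))
    by (rewrite <- !exp_plus; f_equal; field).
  replace (x * x * x / 27) with ((x / 3) * (x / 3) * (x / 3)) by field.
  pose proof (exp_ineq1_le (x / 3)).
  apply Rmult_le_compat; try apply Rmult_le_compat; try apply Rmult_le_pos; lra.
Qed.

Lemma eventually_sq_lt_exp lam eps : 0 < lam -> eps < 1 ->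
  eventually (fun L => 9 * L * L < exp (lam * L) * (1 - eps)).
Proof.
  intros Hlam Heps. set (d := lam * lam * lam * (1 - eps)).
  assert (Hd : 0 < d) by (unfold d; repeat apply Rmult_lt_0_compat; lra).
  exists (Rmax 1 (244 / d)). intros L HL.
  assert (HL1 : 1 <= L) by (eapply Rle_trans; [apply Rmax_l | exact HL]).
  assert (H244 : 244 <= d * L).
  { assert (H : 244 / d <= L) by (eapply Rle_trans; [apply Rmax_r | exact HL]).
    apply (Rmult_le_compat_l d) in H; [|lra].
    replace (d * (244 / d)) with 244 in H by (field; lra). exact H. }
  pose proof (cube_div_27_le_exp (lam * L) ltac:(nra)) as Hexp.
  apply (Rmult_le_compat_r (1 - eps)) in Hexp; [|lra].
  assert (Hcube : lam * L * (lam * L) * (lam * L) / 27 * (1 - eps) = L * L * (d * L) / 27)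
    by (unfold d; field).
  assert (244 * (L * L) <= d * L * (L * L)) by (apply Rmult_le_compat_r; nra).
  nra.
Qed.

(* The finitely many conditions "n is large" used in the estimates, with L standing for log_b n
   and lam for ln b. *)
Definition large_enough (lam c eps L : R) : Prop :=
  3 <= L /\
  2 * ln L / lam + 2 / lam + 2 <= L /\
  9 * L * L < exp (lam * L) * (1 - eps) /\
  11 + lam + 2 * ln L <= 9/10 * lam * L /\
  31/2 + 3 * lam + 4 * ln L <= 9/10 * lam * L /\
  L / 2 + 2 + 16/10 * lam * L + 4 * L + 2 * L * ln L <= lam * L * L / 2 /\
  L / 2 + 3 + 16/10 * lam * L + 3 * (L + 1) * (2 + ln L) <= lam * L * L / 2 /\
  2 * ln L / lam + 8 * ln L + 2 / lam + 39/2 + 3 * lam <= 3/2 * c * L.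

Lemma eventually_large_enough lam c eps : 0 < lam -> 0 < c -> eps < 1 ->
  eventually (large_enough lam c eps).
Proof.
  intros Hlam Hc Heps.
  assert (Hinv : 0 <= 2 / lam) by (apply Rdiv_nonneg; lra).
  pose proof (eventually_lin_ln_le (2 / lam + 2) (2 / lam) 1 Hinv ltac:(lra)) as E1.
  pose proof (eventually_lin_ln_le (11 + lam) 2 (9/10 * lam) ltac:(lra) ltac:(lra)) as E3.
  pose proof (eventually_lin_ln_le (31/2 + 3 * lam) 4 (9/10 * lam) ltac:(lra) ltac:(lra)) as E4.
  pose proof (eventually_lin_ln_le (13/2 + 16/10 * lam) 2 (lam / 2) ltac:(lra) ltac:(lra)) as E5.
  pose proof (eventually_lin_ln_le (31/2 + 16/10 * lam) 6 (lam / 2) ltac:(lra) ltac:(lra)) as E6.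
  pose proof (eventually_lin_ln_le (2 / lam + 39/2 + 3 * lam) (2 / lam + 8) (3/2 * c)
    ltac:(lra) ltac:(lra)) as E7.
  destruct (eventually_and _ _ (eventually_ge 3) (eventually_and _ _ E1
    (eventually_and _ _ (eventually_sq_lt_exp lam eps Hlam Heps) (eventually_and _ _ E3
    (eventually_and _ _ E4 (eventually_and _ _ E5 (eventually_and _ _ E6 E7)))))))
    as [L0 HL0].
  exists L0. intros L HL. destruct (HL0 L HL) as (H3 & H1 & H2 & H4 & H5 & H6 & H7 & H8).
  pose proof (ln_nonneg L ltac:(lra)).
  apply (Rmult_le_compat_l L) in H6; [|lra]. apply (Rmult_le_compat_l L) in H7; [|lra].
  assert (3 * (L + 1) * (2 + ln L) <= 6 * L * (2 + ln L)) by (apply Rmult_le_compat_r; lra).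
  unfold large_enough, Rdiv in *. repeat split; nra.
Qed.

Lemma gam_form_bounds lam c eps L : 0 < lam -> large_enough lam c eps L ->
  L + 2 <= 2 * L - 2 * ln L / lam - 2 * ln 2 / lam <= 2 * L.
Proof.
  intros Hlam (HL3 & HL & _).
  pose proof (ln_nonneg L ltac:(lra)). pose proof ln_2_bounds.
  assert (0 <= ln L / lam) by (apply Rdiv_nonneg; lra).
  assert (0 <= ln 2 / lam) by (apply Rdiv_nonneg; lra).
  assert (ln 2 / lam <= 1 / lam) by (apply Rmult_le_compat_r; [left; apply Rinv_0_lt_compat|]; lra).
  unfold Rdiv in *. lra.
Qed.

Section Estimates.

(* Dl, x0 and L play the roles of Delta, x_0 and log_b n; g is gamma - x_0 - eps. *)
Variables (p c c5 rho eps Dl x0 L : R) (n k a : nat).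

Local Notation lam := (ln (bb p)).
Local Notation nR := (INR n).
Local Notation kR := (INR k).
Local Notation aR := (INR a).
Local Notation g := (INR a - 1 + Dl - x0 - eps).
Local Notation lo := (lnT_lo rho (ln (bb p)) (ln (INR n)) (ln (INR a)) (ln (INR k))).
Local Notation hi := (lnT_hi rho (ln (bb p)) (ln (INR n)) (INR a) (ln (INR a)) (ln (INR k))).

Hypothesis Hp : 0 < p < 1.
Hypothesis Hc : 0 < c <= 1/2.
Hypothesis Hc5 : c5 <= 1/10.
Hypothesis Hc5_c : c5 * lam <= c / 2.
Hypothesis Hc5_1c : c5 * lam <= (1 - c) / 2.
Hypothesis Hrho : 0 <= rho <= c.
Hypothesis Heps : 0 < eps < 1.
Hypothesis HDl : 0 <= Dl < 1.
Hypothesis Hx0 : 0 <= x0 <= Dl.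
Hypothesis Hlarge : large_enough lam c eps L.
Hypothesis Hn : nR = exp (lam * L).
Hypothesis Ha : aR = 2 * L - 2 * ln L / lam - 2 * ln 2 / lam + 1 - Dl.
Hypothesis Hk : nR / g <= kR < nR / g + 1.
Hypothesis Hgap : x0 + eps < Dl -> (1 - Dl) * lam <= 2 * (1 - 2 * c).

Lemma ln_nR : ln nR = lam * L.
Proof. now rewrite Hn, ln_exp. Qed.

Lemma ln_L_nonneg : 0 <= ln L.
Proof. destruct Hlarge. apply ln_nonneg. lra. Qed.

Lemma aR_bounds : L + 2 <= aR <= 2 * L + 1.
Proof. pose proof (gam_form_bounds _ _ _ _ (ln_bb_pos p Hp) Hlarge). lra. Qed.

Lemma g_bounds : L <= g <= 2 * L.
Proof. pose proof (gam_form_bounds _ _ _ _ (ln_bb_pos p Hp) Hlarge). lra. Qed.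

Lemma three_L_le_nR : 3 * L <= nR.
Proof.
  destruct Hlarge as (HL3 & _ & Hsq & _). rewrite Hn.
  assert (exp (lam * L) * (1 - eps) <= exp (lam * L))
    by (pose proof (exp_pos (lam * L)); nra).
  nra.
Qed.

Lemma ratio_ge_1 : 1 <= nR / g.
Proof.
  pose proof g_bounds. pose proof three_L_le_nR. destruct Hlarge.
  apply Rmult_le_reg_r with g; [lra|].
  unfold Rdiv. rewrite Rmult_assoc, Rinv_l by lra. lra.
Qed.

Lemma kR_ge_1 : 1 <= kR.
Proof. pose proof ratio_ge_1. lra. Qed.

Lemma ln_kR_le : ln kR <= ln 2 + lam * L - ln L.
Proof.
  pose proof g_bounds. pose proof ratio_ge_1. pose proof kR_ge_1. destruct Hlarge as (HL3 & _).
  assert (HnR : 0 < nR) by (rewrite Hn; apply exp_pos).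
  assert (nR / g <= nR / L) by (apply Rmult_le_compat_l; [lra | apply Rinv_le_contravar; lra]).
  apply Rle_trans with (ln (2 * nR / L)); [apply ln_le; unfold Rdiv in *; lra|].
  rewrite ln_div, ln_mult, ln_nR by lra. lra.
Qed.

Lemma ratio_le_g : nR / kR <= g.
Proof.
  pose proof g_bounds. pose proof kR_ge_1. destruct Hlarge as (HL3 & _).
  apply Rmult_le_reg_r with kR; [lra|].
  unfold Rdiv. rewrite Rmult_assoc, Rinv_l by lra.
  destruct Hk as [Hk1 _]. apply (Rmult_le_compat_l g) in Hk1; [|lra].
  replace (g * (nR / g)) with nR in Hk1 by (field; lra). lra.
Qed.

(* Since k < n/g + 1, n/k > n g/(n + g), which exceeds a - 2 because (a - 2) g <= 9 L^2 < n (1 - eps). *)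
Lemma aR_sub_2_lt_ratio : aR - 2 < nR / kR.
Proof.
  pose proof g_bounds. pose proof aR_bounds. pose proof three_L_le_nR. pose proof kR_ge_1.
  destruct Hlarge as (HL3 & _ & Hsq & _). rewrite <- Hn in Hsq.
  assert (HkR : kR < (nR + g) / g) by (replace ((nR + g) / g) with (nR / g + 1) by (field; lra); lra).
  assert (nR * g / (nR + g) < nR / kR).
  { apply Rmult_lt_reg_r with ((nR + g) / g * kR).
    { apply Rmult_lt_0_compat; [apply Rdiv_lt_0_compat|]; lra. }
    replace (nR * g / (nR + g) * ((nR + g) / g * kR)) with (nR * kR) by (field; lra).
    replace (nR / kR * ((nR + g) / g * kR)) with (nR * ((nR + g) / g)) by (field; lra).
    apply Rmult_lt_compat_l; lra. }
  assert (aR - 2 <= nR * g / (nR + g)).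
  { apply Rmult_le_reg_r with (nR + g); [lra|].
    replace (nR * g / (nR + g) * (nR + g)) with (nR * g) by (field; lra).
    assert ((aR - 2) * g <= (3 * L) * (3 * L)) by (apply Rmult_le_compat; lra).
    assert (nR * (1 - eps) <= nR * (g - aR + 2)) by (apply Rmult_le_compat_l; lra).
    lra. }
  lra.
Qed.

Lemma ln_aR_bounds : 0 <= ln aR <= 2 + ln L.
Proof.
  pose proof aR_bounds. destruct Hlarge as (HL3 & _). split; [apply ln_nonneg; lra|].
  apply Rle_trans with (ln (3 * L)); [apply ln_le; lra|].
  rewrite ln_mult by lra. pose proof (ln_le_sub_1 3). lra.
Qed.

Lemma ln_aR_sub_le : ln aR - ln L - ln 2 <= 1 / (2 * L).
Proof.
  pose proof aR_bounds. destruct Hlarge as (HL3 & _).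
  replace (ln aR - ln L - ln 2) with (ln (aR / (2 * L))) by (rewrite ln_div, ln_mult by lra; ring).
  eapply Rle_trans; [apply ln_le_sub_1, Rdiv_lt_0_compat; lra|].
  apply Rmult_le_reg_r with (2 * L); [lra|].
  replace ((aR / (2 * L) - 1) * (2 * L)) with (aR - 2 * L) by (field; lra).
  replace (1 / (2 * L) * (2 * L)) with 1 by (field; lra). lra.
Qed.

Lemma c5_mul_le : c5 * (lam * L) <= 1/10 * (lam * L).
Proof.
  pose proof (ln_bb_pos p Hp). destruct Hlarge.
  apply Rmult_le_compat_r; [apply Rmult_le_pos|]; lra.
Qed.

Lemma lo_at_2 : lo 2 <= (1 - c5) * ln nR.
Proof.
  pose proof ln_kR_le. pose proof ln_aR_bounds. pose proof ln_2_bounds.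
  pose proof ln_L_nonneg. pose proof c5_mul_le. destruct Hlarge as (_ & _ & _ & HL & _).
  unfold lnT_lo. rewrite ln_nR. lra.
Qed.

Lemma lo_at_3 : lo 3 <= - c5 * ln nR.
Proof.
  pose proof ln_kR_le. pose proof ln_aR_bounds. pose proof ln_2_bounds.
  pose proof ln_L_nonneg. pose proof c5_mul_le. destruct Hlarge as (_ & _ & _ & _ & HL & _).
  unfold lnT_lo. rewrite ln_nR. lra.
Qed.

Lemma lo_at_L : lo L <= - c5 * ln nR.
Proof.
  pose proof ln_kR_le. pose proof ln_aR_bounds. pose proof ln_2_bounds.
  pose proof ln_L_nonneg. pose proof c5_mul_le. destruct Hlarge as (HL3 & _ & _ & _ & _ & HL & _).
  assert (rho * L <= L / 2) by (apply Rle_trans with (1/2 * L); [apply Rmult_le_compat_r|]; lra).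
  assert (L * ln aR <= L * (2 + ln L)) by (apply Rmult_le_compat_l; lra).
  unfold lnT_lo. rewrite ln_nR. lra.
Qed.

Lemma hi_at_L : hi L <= - c5 * ln nR.
Proof.
  pose proof ln_kR_le. pose proof ln_aR_bounds. pose proof ln_2_bounds.
  pose proof ln_L_nonneg. pose proof c5_mul_le. pose proof aR_bounds.
  destruct Hlarge as (HL3 & _ & _ & _ & _ & _ & HL & _).
  assert (rho * L <= L / 2) by (apply Rle_trans with (1/2 * L); [apply Rmult_le_compat_r|]; lra).
  assert ((aR - L) * ln aR <= (L + 1) * (2 + ln L)) by (apply Rmult_le_compat; lra).
  assert (L / aR <= 1)
    by (apply Rmult_le_reg_r with aR; [lra|]; unfold Rdiv; rewrite Rmult_assoc, Rinv_l; lra).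
  assert ((L + 1) * (ln aR + L / aR - 1) <= (L + 1) * (2 + ln L)) by (apply Rmult_le_compat_l; lra).
  unfold lnT_hi. rewrite ln_nR. lra.
Qed.

(* Eliminating lam * L through the formula for a leaves hi (a - j) nearly linear in i = a - j. *)
Lemma hi_sub_eq j : hi (aR - j) =
  (aR - j) * (rho - 1 - (Dl + j) * lam / 2 + (ln aR - ln L - ln 2))
  + 2 * ln kR + (2 * j + 1) * ln aR + 1 - (aR - j + 1) * (j / aR).
Proof.
  pose proof aR_bounds. pose proof (ln_bb_pos p Hp). destruct Hlarge as (HL3 & _).
  assert (HlamL : lam * L = (aR - 1 + Dl) * lam / 2 + ln L + ln 2) by (rewrite Ha; field; lra).
  unfold lnT_hi. rewrite ln_nR, HlamL. field. lra.
Qed.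

Lemma hi_sub_le j : 0 <= j <= 2 ->
  hi (aR - j) <= lam * L * (2 - Dl - j) - 2 * (1 - rho) * L
                 + (2 * ln L / lam + 8 * ln L + 2 / lam + 39/2 + 3 * lam).
Proof.
  intros Hj. rewrite hi_sub_eq.
  pose proof ln_kR_le as Hk'. pose proof ln_aR_bounds. pose proof ln_2_bounds as H2.
  pose proof ln_L_nonneg as HlnL. pose proof aR_bounds. pose proof ln_aR_sub_le. pose proof (ln_bb_pos p Hp) as Hlam.
  pose proof (gam_form_bounds _ _ _ _ Hlam Hlarge).
  set (gm := 2 * L - 2 * ln L / lam - 2 * ln 2 / lam) in *.
  set (i := aR - j).
  assert (Hi : gm - 2 <= i <= 3 * L) by (unfold i, gm in *; lra).
  set (slope := 1 - rho + (Dl + j) * lam / 2).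
  assert (Hslope : 0 <= slope <= 1 + 3/2 * lam).
  { assert (0 <= (Dl + j) * lam <= 3 * lam) by (split; [apply Rmult_le_pos | apply Rmult_le_compat_r]; lra).
    unfold slope. lra. }
  assert (E1 : 0 <= (i + 1) * (j / aR)) by (apply Rmult_le_pos; [|apply Rdiv_nonneg]; lra).
  assert (E2 : i * (ln aR - ln L - ln 2) <= 3/2).
  { apply Rle_trans with (i * (1 / (2 * L))); [apply Rmult_le_compat_l; lra|].
    replace (i * (1 / (2 * L))) with (i / (2 * L)) by (field; lra).
    apply Rmult_le_reg_r with (2 * L); [lra|].
    replace (i / (2 * L) * (2 * L)) with i by (field; lra). lra. }
  assert (E3 : - slope * i <= - slope * (gm - 2))
    by (assert (slope * (gm - 2) <= slope * i) by (apply Rmult_le_compat_l; lra); lra).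
  assert (E4 : (2 * j + 1) * ln aR <= 5 * (2 + ln L)) by (apply Rmult_le_compat; lra).
  assert (E5 : slope * (2 * ln L / lam + 2 * ln 2 / lam + 2)
               <= (1 + 3/2 * lam) * (2 * ln L / lam + 2 / lam + 2)).
  { assert (0 <= ln L / lam) by (apply Rdiv_nonneg; lra).
    assert (0 <= ln 2 / lam) by (apply Rdiv_nonneg; lra).
    assert (ln 2 / lam <= 1 / lam) by (apply Rmult_le_compat_r; [left; apply Rinv_0_lt_compat|]; lra).
    apply Rmult_le_compat; unfold Rdiv in *; lra. }
  assert (E6 : (1 + 3/2 * lam) * (2 * ln L / lam + 2 / lam + 2)
               = 2 * ln L / lam + 3 * ln L + 2 / lam + 5 + 3 * lam) by (field; lra).
  assert (E7 : - slope * (gm - 2) = - slope * (2 * L) + slope * (2 * ln L / lam + 2 * ln 2 / lam + 2))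
    by (unfold gm; field; lra).
  assert (E8 : - slope * (2 * L) = lam * L * (2 - Dl - j) - 2 * (1 - rho) * L - 2 * lam * L)
    by (unfold slope; field).
  replace (i * (rho - 1 - (Dl + j) * lam / 2 + (ln aR - ln L - ln 2)))
    with (- slope * i + i * (ln aR - ln L - ln 2)) by (unfold slope; field).
  clear - E1 E2 E3 E4 E5 E6 E7 E8 Hk' H2 HlnL. lra.
Qed.

Lemma hi_at_a_sub_2 : hi (aR - 2) <= - c5 * ln nR.
Proof.
  pose proof (hi_sub_le 2 ltac:(lra)). pose proof (ln_bb_pos p Hp).
  destruct Hlarge as (HL3 & _ & _ & _ & _ & _ & _ & HL). rewrite ln_nR in H |- *.
  assert (c5 * lam * L <= (1 - c) / 2 * L) by (apply Rmult_le_compat_r; lra).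
  assert (0 <= lam * L * Dl) by (apply Rmult_le_pos; [apply Rmult_le_pos|]; lra).
  assert (rho * L <= c * L) by (apply Rmult_le_compat_r; lra).
  assert (c * L <= (1 - c) * L) by (apply Rmult_le_compat_r; lra).
  lra.
Qed.

Lemma hi_at_a_sub_1 : hi (aR - 1) <= (1 - c5) * ln nR.
Proof.
  pose proof (hi_sub_le 1 ltac:(lra)). pose proof (ln_bb_pos p Hp).
  destruct Hlarge as (HL3 & _ & _ & _ & _ & _ & _ & HL). rewrite ln_nR in H |- *.
  assert (c5 * lam * L <= (1 - c) / 2 * L) by (apply Rmult_le_compat_r; lra).
  assert (0 <= lam * L * Dl) by (apply Rmult_le_pos; [apply Rmult_le_pos|]; lra).
  assert (rho * L <= c * L) by (apply Rmult_le_compat_r; lra).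
  assert (c * L <= (1 - c) * L) by (apply Rmult_le_compat_r; lra).
  lra.
Qed.

Lemma hi_at_a_sub_1_of_gap : x0 + eps < Dl -> hi (aR - 1) <= - c5 * ln nR.
Proof.
  intro Hx. pose proof (hi_sub_le 1 ltac:(lra)). pose proof (ln_bb_pos p Hp).
  destruct Hlarge as (HL3 & _ & _ & _ & _ & _ & _ & HL). rewrite ln_nR in H |- *.
  assert (c5 * lam * L <= c / 2 * L) by (apply Rmult_le_compat_r; lra).
  assert ((1 - Dl) * lam * L <= 2 * (1 - 2 * c) * L) by (apply Rmult_le_compat_r; auto; lra).
  assert (rho * L <= c * L) by (apply Rmult_le_compat_r; lra).
  lra.
Qed.

Lemma hi_at_a_of_gap : x0 + eps < Dl -> hi aR <= (1 - c5) * ln nR.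
Proof.
  intro Hx. pose proof (hi_sub_le 0 ltac:(lra)). rewrite Rminus_0_r in H.
  pose proof (ln_bb_pos p Hp).
  destruct Hlarge as (HL3 & _ & _ & _ & _ & _ & _ & HL). rewrite ln_nR in H |- *.
  assert (c5 * lam * L <= c / 2 * L) by (apply Rmult_le_compat_r; lra).
  assert ((1 - Dl) * lam * L <= 2 * (1 - 2 * c) * L) by (apply Rmult_le_compat_r; auto; lra).
  assert (rho * L <= c * L) by (apply Rmult_le_compat_r; lra).
  lra.
Qed.

Lemma ceil_ratio_bounds : (Z.of_nat a - 1 <= Rceil (nR / kR) <= Z.of_nat a)%Z.
Proof.
  pose proof ratio_le_g. pose proof aR_sub_2_lt_ratio. destruct (Rceil_spec (nR / kR)).
  rewrite (INR_IZR_INZ a) in *. split.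
  - assert (IZR (Z.of_nat a - 2) < IZR (Rceil (nR / kR))) by (rewrite minus_IZR; lra).
    apply lt_IZR in H3. lia.
  - assert (IZR (Rceil (nR / kR)) < IZR (Z.of_nat a + 1)) by (rewrite plus_IZR; lra).
    apply lt_IZR in H3. lia.
Qed.

Lemma gap_of_ceil_ratio_eq : Rceil (nR / kR) = Z.of_nat a -> x0 + eps < Dl.
Proof.
  intro Hm. pose proof ratio_le_g. destruct (Rceil_spec (nR / kR)).
  rewrite Hm, <- INR_IZR_INZ in *. lra.
Qed.

Lemma n_ge_1 : (1 <= n)%nat.
Proof. pose proof three_L_le_nR. destruct Hlarge. apply INR_le. simpl. lra. Qed.

Lemma k_ge_1 : (1 <= k)%nat.
Proof. pose proof kR_ge_1. apply INR_le. simpl. lra. Qed.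

Lemma a_ge_5 : (5 <= a)%nat.
Proof. pose proof aR_bounds. destruct Hlarge. apply INR_le. simpl. lra. Qed.

Lemma Tq_le_Rpower_of_lo i t : (i <= a)%nat -> lo (INR i) <= t * ln nR ->
  Tq p rho n k a i <= Rpower nR t.
Proof.
  intros Hi Hlo. pose proof a_ge_5.
  eapply Rle_trans; [apply Tq_le_exp_lnT_lo; auto using n_ge_1, k_ge_1; lia|].
  now apply exp_le.
Qed.

Lemma Tq_le_Rpower_of_hi i t : (1 <= i <= a)%nat -> hi (INR i) <= t * ln nR ->
  Tq p rho n k a i <= Rpower nR t.
Proof.
  intros Hi Hhi.
  eapply Rle_trans; [apply Tq_le_exp_lnT_hi; auto using n_ge_1, k_ge_1; lia|].
  now apply exp_le.
Qed.

Lemma Tq_middle_le i j : (3 <= i)%nat -> (i + j <= a)%nat ->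
  hi (aR - INR j) <= - c5 * ln nR -> Tq p rho n k a i <= Rpower nR (- c5).
Proof.
  intros Hi3 Hij Hend.
  assert (Hi3R : 3 <= INR i) by (apply (le_INR 3) in Hi3; simpl in Hi3; lra).
  assert (HijR : INR i <= aR - INR j) by (apply le_INR in Hij; rewrite plus_INR in Hij; lra).
  pose proof aR_bounds. pose proof (ln_bb_pos p Hp).
  destruct (Rle_lt_dec (INR i) L) as [HiL | HiL].
  - apply Tq_le_Rpower_of_lo; [lia|].
    apply (convex_quadratic_le_of_endpoints lo (lam / 2) (rho - lam / 2 + 2 * ln aR - ln nR)
      (2 * ln kR) 3 L); auto using lnT_lo_quadratic, lo_at_3, lo_at_L; lra.
  - apply Tq_le_Rpower_of_hi; [lia|].
    assert (0 <= / aR) by (left; apply Rinv_0_lt_compat; lra).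
    apply (convex_quadratic_le_of_endpoints hi (lam / 2 + / aR)
      (rho - lam / 2 - 2 * ln aR + (ln aR - 1) + / aR - 1 - ln nR)
      (2 * ln kR + 2 * aR * ln aR + ln aR) L (aR - INR j)); auto using hi_at_L; try lra.
    intro y. apply lnT_hi_quadratic. lra.
Qed.

Lemma Tq_estimates :
  let m := Rceil (nR / kR) in
  (forall i : nat, (3 <= Z.of_nat i <= m - 1)%Z -> Tq p rho n k a i <= Rpower nR (- c5)) /\
  (forall i : nat, (Z.of_nat i = 2 \/ Z.of_nat i = m)%Z -> Tq p rho n k a i <= Rpower nR (1 - c5)).
Proof.
  intro m. pose proof ceil_ratio_bounds as Hm. pose proof a_ge_5. fold m in Hm.
  assert (Hlo2 : Tq p rho n k a 2 <= Rpower nR (1 - c5))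
    by (apply Tq_le_Rpower_of_lo; [lia | exact lo_at_2]).
  destruct (Z.eq_dec m (Z.of_nat a)) as [Hma | Hma]; split.
  - intros i Hi. apply (Tq_middle_le i 1); [lia | lia |].
    exact (hi_at_a_sub_1_of_gap (gap_of_ceil_ratio_eq Hma)).
  - intros i [Hi | Hi]; [replace i with 2%nat by lia; exact Hlo2|].
    replace i with a by lia. apply Tq_le_Rpower_of_hi; [lia|].
    exact (hi_at_a_of_gap (gap_of_ceil_ratio_eq Hma)).
  - intros i Hi. apply (Tq_middle_le i 2); [lia | lia | exact hi_at_a_sub_2].
  - intros i [Hi | Hi]; [replace i with 2%nat by lia; exact Hlo2|].
    replace i with (a - 1)%nat by lia. apply Tq_le_Rpower_of_hi; [lia|].
    rewrite minus_INR by lia. exact hi_at_a_sub_1.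
Qed.

End Estimates.

Lemma log_ratio_ge_of_large lam L0 n : 0 < lam -> (Z.to_nat (up (exp (lam * L0))) <= n)%nat ->
  INR n = exp (lam * (ln (INR n) / lam)) /\ L0 <= ln (INR n) / lam.
Proof.
  intros Hlam Hn. destruct (archimed (exp (lam * L0))) as [Hup _].
  pose proof (exp_pos (lam * L0)).
  apply le_INR in Hn. rewrite INR_Z_to_nat in Hn by (apply le_IZR; lra).
  replace (lam * (ln (INR n) / lam)) with (ln (INR n)) by (field; lra).
  rewrite exp_ln by lra. split; [reflexivity|].
  apply Rmult_le_reg_l with lam; [lra|].
  replace (lam * (ln (INR n) / lam)) with (ln (INR n)) by (field; lra).
  rewrite <- (ln_exp (lam * L0)). apply ln_le; lra.
Qed.

Theorem lemma10 (p eps : R) (x0 : nat -> R) :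
  0 < p < 1 -> 0 < eps < 1 ->
  (forall n, is_x0 p n (x0 n)) ->
  exists N : nat, forall n : nat, (N <= n)%nat ->
    forall rho : R, 0 <= rho <= cc eps ->
    let k := Z.to_nat (kZ p eps (x0 n) n) in
    let a := Z.to_nat (aZ p n) in
    let m := Rceil (INR n / INR k) in
    (forall i : nat, (3 <= Z.of_nat i <= m - 1)%Z ->
       Tq p rho n k a i <= Rpower (INR n) (- c5 p eps)) /\
    (forall i : nat, (Z.of_nat i = 2 \/ Z.of_nat i = m)%Z ->
       Tq p rho n k a i <= Rpower (INR n) (1 - c5 p eps)).
Proof.
  intros Hp He Hx0.
  pose proof (ln_bb_pos p Hp) as Hlam.
  destruct (c5_spec p eps Hp He) as (Hc & Hc5 & Hc5_c & Hc5_1c).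
  destruct (eventually_large_enough (ln (bb p)) (cc eps) eps Hlam ltac:(lra) ltac:(lra)) as [L0 HL0].
  exists (Z.to_nat (up (exp (ln (bb p) * L0)))).
  intros n Hn rho Hrho k a.
  destruct (log_ratio_ge_of_large _ _ _ Hlam Hn) as [HnL HL].
  set (L := ln (INR n) / ln (bb p)) in *.
  pose proof (HL0 L HL) as Hlarge.
  assert (Hgam : gam p n = 2 * L - 2 * ln L / ln (bb p) - 2 * ln 2 / ln (bb p))
    by (unfold gam, logb; fold L; field; lra).
  pose proof (gam_form_bounds _ _ _ _ Hlam Hlarge).
  assert (Ha : INR a = gam p n + 1 - Delta p n) by (apply INR_aZ; lra).
  pose proof (Delta_range p n). pose proof (x0_le_Delta p n (x0 n) (Hx0 n)).
  pose proof (proj1 (Hx0 n)).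
  assert (Hk : INR n / (INR a - 1 + Delta p n - x0 n - eps) <= INR k
                < INR n / (INR a - 1 + Delta p n - x0 n - eps) + 1).
  { replace (INR a - 1 + Delta p n - x0 n - eps) with (gam p n - x0 n - eps) by lra.
    apply INR_ceil_bounds. rewrite HnL. apply Rdiv_lt_0_compat; [apply exp_pos | lra]. }
  apply (Tq_estimates p (cc eps) (c5 p eps) rho eps (Delta p n) (x0 n) L n k a);
    try assumption; try lra.
  intro Hgap. replace (1 - 2 * cc eps) with (c2 eps) by (unfold cc; field).
  exact (Delta_large_of_x0_gap p eps n (x0 n) Hp He (Hx0 n) Hgap).
Qed.
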